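(* Let $A\in\mathbb{R}^{n\times n}$ be symmetric with eigenvalues $\alpha_1\ge\cdots\ge\alpha_n$, $g\in\mathbb{R}^n$ nonzero, $\Delta>0$, and consider the TRS of minimizing $f(x)=\frac12x^TAx+x^Tg$ subject to $\|x\|\le\Delta$, in the easy case. With $x_{opt},\lambda_{opt},A_{opt},\kappa,x_k,\lambda_k,k_{\max},\epsilon_k$ as in the context, suppose $\|x_{opt}\|=\|x_k\|=\Delta$ for some $k\in\{1,\ldots,k_{\max}\}$ and let $r_k=(A+\lambda_kI)x_k+g$. Then $$\|r_k\|\le\|A_{opt}\|\sqrt{1+\frac{\epsilon_k^2}{\Delta^2}}\;\epsilon_k\le 2\|A_{opt}\|\sqrt{\Delta^2+\epsilon_k^2}\Big(\frac{\sqrt\kappa-1}{\sqrt\kappa+1}\Big)^k.$$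
   Context: All norms are Euclidean. $x_{opt}$ is a global minimizer of the TRS and $\lambda_{opt}\ge0$ its Lagrange multiplier: $(A+\lambda_{opt}I)x_{opt}=-g$, $\lambda_{opt}(\Delta-\|x_{opt}\|)=0$, $A+\lambda_{opt}I\succeq0$. Easy case: $\lambda_{opt}>-\alpha_n$. $A_{opt}=A+\lambda_{opt}I$, $\kappa=(\alpha_1+\lambda_{opt})/(\alpha_n+\lambda_{opt})$. The Lanczos process on $A$ with starting vector $g$ gives $Q_k=[q_1,\ldots,q_k]$ with orthonormal columns spanning $\mathcal{K}_k(A,g)=\mathrm{span}\{g,\ldots,A^{k-1}g\}$, $q_1=g/\|g\|$, tridiagonal $T_k=Q_k^TAQ_k$, and $AQ_k=Q_kT_k+\beta_kq_{k+1}e_k^T$; $k_{\max}$ is the first step at which Lanczos breaks down. GLTR iterate: $x_k=Q_kh_k$ where $h_k$ minimizes $\frac12h^TT_kh+\|g\|h^Te_1$ over $\|h\|\le\Delta$, with multiplier $\lambda_k\ge0$: $(T_k+\lambda_kI)h_k=-\|g\|e_1$, $\lambda_k(\Delta-\|h_k\|)=0$, $T_k+\lambda_kI\succeq0$. $\epsilon_k=\|(I-Q_kQ_k^T)x_{opt}\|=\min_{x\in\mathcal{K}_k(A,g)}\|x-x_{opt}\|$. *)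

From HB Require Import structures.
From mathcomp Require Import all_boot all_order all_algebra.
From mathcomp Require Import classical_sets reals.
Set Implicit Arguments. Unset Strict Implicit. Unset Printing Implicit Defensive.
Import Order.TTheory GRing.Theory Num.Theory.
Local Open Scope ring_scope.
Local Open Scope classical_set_scope.

Section Defs.
Variable R : realType.

Definition vnorm (m : nat) (x : 'cV[R]_m) : R :=
  Num.sqrt (\sum_(i < m) x i 0 ^+ 2).

Definition opnorm (m p : nat) (M : 'M[R]_(m, p)) : R :=
  sup [set vnorm (M *m x) | x in [set x : 'cV[R]_p | vnorm x <= 1]].

Definition qform (m : nat) (M : 'M[R]_m) (v : 'cV[R]_m) : R :=
  (v^T *m M *m v) 0 0.

Definition trs_obj (n : nat) (A : 'M[R]_n) (g : 'cV[R]_n) (x : 'cV[R]_n) : R :=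
  2^-1 * qform A x + (x^T *m g) 0 0.

Definition psd (m : nat) (M : 'M[R]_m) : Prop := forall v : 'cV[R]_m, 0 <= qform M v.

Definition krylov (n k : nat) (A : 'M[R]_n) (g : 'cV[R]_n) : 'M[R]_(n, k) :=
  \matrix_(i < n, j < k) (iter j (mulmx A) g) i 0.

Definition e1 (k : nat) : 'cV[R]_k := \col_(i < k) ((i : nat) == 0%N)%:R.

End Defs.
Arguments e1 {R} k.

From HB Require Import structures.
From mathcomp Require Import all_boot all_order all_algebra.
From mathcomp Require Import classical_sets reals.
From mathcomp Require Import complex spectral.
From mathcomp Require Import ring lra.
Import Order.TTheory GRing.Theory Num.Theory.
Local Open Scope ring_scope.

(* Let B = A + lamopt I, which is positive semidefinite, and P = Q Q^T.  Since
   f(x) = 1/2 (x - xopt)^T B (x - xopt) - lamopt/2 |x|^2 + const, on the sphere |x| = Delta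
   the GLTR iterate x_k minimises the B-energy distance to xopt over the Krylov space.  The
   Galerkin condition Q^T r_k = 0 gives r_k = (I - P) B (x_k - xopt), hence
   |r_k|^2 <= |B| (x_k - xopt)^T B (x_k - xopt), and comparing x_k with the radial projection
   of P xopt onto the sphere yields the first inequality.
   For the second, M = (alpha_n + alpha_1) I - 2 A has |M| <= alpha_1 - alpha_n and
   M xopt = s xopt + 2 g with s = (alpha_n + lamopt) + (alpha_1 + lamopt).  A Chebyshev
   polynomial in M applied to xopt, normalised by its value at s, differs from xopt by a Krylov
   vector y, and |xopt - y| <= 2 Delta ((sqrt kappa - 1) / (sqrt kappa + 1))^k; finally
   eps_k <= |xopt - y|. *)

Set Implicit Arguments. Unset Strict Implicit. Unset Printing Implicit Defensive.

Section Dot.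
Variables (R : realType) (n : nat).
Implicit Types u v w : 'cV[R]_n.

Definition dot u v : R := (u^T *m v) 0 0.

Lemma dotE u v : dot u v = \sum_i u i 0 * v i 0.
Proof. by rewrite /dot mxE; apply: eq_bigr => i _; rewrite mxE. Qed.

Lemma dotC u v : dot u v = dot v u.
Proof. by rewrite !dotE; apply: eq_bigr => i _; rewrite mulrC. Qed.

Lemma dotDl u v w : dot (u + v) w = dot u w + dot v w.
Proof. by rewrite !dotE -big_split; apply: eq_bigr => i _; rewrite mxE mulrDl. Qed.

Lemma dotZl a u w : dot (a *: u) w = a * dot u w.
Proof. by rewrite !dotE mulr_sumr; apply: eq_bigr => i _; rewrite mxE mulrA. Qed.

Lemma dotNl u w : dot (- u) w = - dot u w.
Proof. by rewrite -scaleN1r dotZl mulN1r. Qed.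

Lemma dotBl u v w : dot (u - v) w = dot u w - dot v w.
Proof. by rewrite dotDl dotNl. Qed.

Lemma dotDr u v w : dot w (u + v) = dot w u + dot w v.
Proof. by rewrite dotC dotDl !(dotC w). Qed.

Lemma dotZr a u w : dot w (a *: u) = a * dot w u.
Proof. by rewrite dotC dotZl dotC. Qed.

Lemma dotNr u w : dot w (- u) = - dot w u.
Proof. by rewrite dotC dotNl dotC. Qed.

Lemma dotBr u v w : dot w (u - v) = dot w u - dot w v.
Proof. by rewrite dotDr dotNr. Qed.

Lemma dot0l u : dot 0 u = 0.
Proof. by rewrite /dot trmx0 mul0mx mxE. Qed.

Lemma dot0r u : dot u 0 = 0.
Proof. by rewrite dotC dot0l. Qed.

Lemma dot_ge0 u : 0 <= dot u u.
Proof. by rewrite dotE; apply: sumr_ge0 => i _; rewrite -expr2 sqr_ge0. Qed.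

Lemma dot_eq0 u : (dot u u == 0) = (u == 0).
Proof.
apply/idP/idP; last by move/eqP->; rewrite dot0l.
rewrite dotE psumr_eq0 => [/allP u0|i _]; last by rewrite -expr2 sqr_ge0.
apply/eqP/matrixP => i j; rewrite ord1 mxE.
by have := u0 i (mem_index_enum i); rewrite -expr2 sqrf_eq0 => /eqP.
Qed.

Lemma dot_addr_orth u w : dot u w = 0 -> dot (u + w) (u + w) = dot u u + dot w w.
Proof. by move=> uw; rewrite !dotDl !dotDr (dotC w u) uw addr0 add0r. Qed.

Lemma vnormE u : vnorm u = Num.sqrt (dot u u).
Proof. by rewrite /vnorm dotE; congr Num.sqrt; apply: eq_bigr => i _; rewrite expr2. Qed.

Lemma vnorm_ge0 u : 0 <= vnorm u.
Proof. by rewrite vnormE sqrtr_ge0. Qed.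

Lemma vnorm_sqr u : vnorm u ^+ 2 = dot u u.
Proof. by rewrite vnormE sqr_sqrtr // dot_ge0. Qed.

Lemma vnorm0 : vnorm (0 : 'cV[R]_n) = 0.
Proof. by rewrite vnormE dot0l sqrtr0. Qed.

Lemma vnorm_eq0 u : (vnorm u == 0) = (u == 0).
Proof. by rewrite vnormE sqrtr_eq0 -dot_eq0 eq_le dot_ge0 andbT. Qed.

Lemma vnormZ a u : vnorm (a *: u) = `|a| * vnorm u.
Proof. by rewrite !vnormE dotZl dotZr mulrA -expr2 sqrtrM ?sqr_ge0 // sqrtr_sqr. Qed.

Lemma qformE (M : 'M[R]_n) v : qform M v = dot v (M *m v).
Proof. by rewrite /qform /dot mulmxA. Qed.

Lemma psd_cauchy_schwarz (M : 'M[R]_n) u v : M^T = M -> psd M ->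
  dot u (M *m v) ^+ 2 <= dot u (M *m u) * dot v (M *m v).
Proof.
move=> MT Mpsd.
set a := dot u (M *m u); set b := dot u (M *m v); set c := dot v (M *m v).
have quad t : 0 <= a + 2 * t * b + t ^+ 2 * c.
  have := Mpsd (u + t *: v).
  rewrite qformE mulmxDr -scalemxAr !dotDl !dotDr !dotZl !dotZr.
  have -> : dot v (M *m u) = b by rewrite dotC /dot trmx_mul MT -mulmxA.
  by rewrite -/a -/b -/c => ?; lra.
have c0 : 0 <= c by have := Mpsd v; rewrite qformE.
have [c_gt0|] := ltrP 0 c.
  have := quad (- b / c).
  have -> : a + 2 * (- b / c) * b + (- b / c) ^+ 2 * c = a - b ^+ 2 / c.
    by field; rewrite gt_eqF.
  by rewrite subr_ge0 ler_pdivrMr // mulrC.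
move=> c_le0; have c_eq0 : c = 0 by apply/eqP; rewrite eq_le c_le0 c0.
rewrite c_eq0 mulr0; have [-> | b0] := eqVneq b 0; first by rewrite expr0n.
have := quad (- (a + 1) / (2 * b)); rewrite c_eq0 mulr0 addr0.
have -> : 2 * (- (a + 1) / (2 * b)) * b = - (a + 1) by field; rewrite b0.
lra.
Qed.

Lemma dot_le_vnorm u v : dot u v <= vnorm u * vnorm v.
Proof.
have psd1 : psd (1%:M : 'M[R]_n) by move=> w; rewrite qformE mul1mx dot_ge0.
have := psd_cauchy_schwarz u v (trmx1 _ _) psd1.
rewrite !mul1mx -!vnorm_sqr -exprMn => uv; apply: le_trans (ler_norm _) _.
rewrite -(ler_pXn2r (isT : (0 < 2)%N)) ?nnegrE ?mulr_ge0 ?vnorm_ge0 //.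
by rewrite real_normK ?num_real.
Qed.

End Dot.

Lemma dotMl (R : realType) m p (M : 'M[R]_(m, p)) (u : 'cV[R]_p) (v : 'cV[R]_m) :
  dot (M *m u) v = dot u (M^T *m v).
Proof. by rewrite /dot trmx_mul mulmxA. Qed.

Section OperatorNorm.
Variable R : realType.

Lemma norm_coord_le_vnorm m (x : 'cV[R]_m) j : `|x j 0| <= vnorm x.
Proof.
rewrite /vnorm -sqrtr_sqr ler_sqrt; last by apply: sumr_ge0 => i _; rewrite sqr_ge0.
by rewrite (bigD1 j) //= lerDl; apply: sumr_ge0 => i _; exact: sqr_ge0.
Qed.

Lemma opnorm_has_ubound m p (M : 'M[R]_(m, p)) :
  has_ubound [set vnorm (M *m x) | x in [set x : 'cV[R]_p | vnorm x <= 1]].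
Proof.
exists (Num.sqrt (\sum_i (\sum_j `|M i j|) ^+ 2)) => _ [x /= x1 <-].
rewrite /vnorm ler_sqrt; last by apply: sumr_ge0 => i _; rewrite sqr_ge0.
apply: ler_sum => i _.
have Mx_le : `|(M *m x) i 0| <= \sum_j `|M i j|.
  rewrite mxE; apply: le_trans (ler_norm_sum _ _ _) _.
  apply: ler_sum => j _; rewrite normrM -[X in _ <= X]mulr1.
  by apply: ler_wpM2l => //; exact: le_trans (norm_coord_le_vnorm x j) x1.
rewrite -(real_normK (num_real _)); apply: lerXn2r => //; rewrite ?nnegrE //.
by apply: sumr_ge0 => j _.
Qed.

Lemma opnorm_ge0 m p (M : 'M[R]_(m, p)) : 0 <= opnorm M.
Proof.
rewrite (_ : 0 = vnorm (M *m 0)); last by rewrite mulmx0 vnorm0.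
by apply: (ub_le_sup (opnorm_has_ubound M)); exists 0; rewrite /= ?vnorm0 ?ler01.
Qed.

Lemma vnorm_mulmx_le m p (M : 'M[R]_(m, p)) x : vnorm (M *m x) <= opnorm M * vnorm x.
Proof.
have [->|x0] := eqVneq x 0; first by rewrite mulmx0 !vnorm0 mulr0.
have vx0 : 0 < vnorm x by rewrite lt_def vnorm_eq0 x0 vnorm_ge0.
have : vnorm (M *m ((vnorm x)^-1 *: x)) <= opnorm M.
  apply: (ub_le_sup (opnorm_has_ubound M)); exists ((vnorm x)^-1 *: x) => //=.
  by rewrite vnormZ ger0_norm ?invr_ge0 ?vnorm_ge0 // mulVf // gt_eqF.
rewrite -scalemxAr vnormZ ger0_norm ?invr_ge0 ?vnorm_ge0 // => Mx_le.
by rewrite -ler_pdivrMr // mulrC.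
Qed.

Lemma dot_mulmx_le_opnorm n (B : 'M[R]_n) v : dot v (B *m v) <= opnorm B * dot v v.
Proof.
apply: le_trans (dot_le_vnorm _ _) _; rewrite -vnorm_sqr expr2 mulrCA.
by rewrite ler_wpM2l ?vnorm_ge0 // vnorm_mulmx_le.
Qed.

(* Cauchy-Schwarz in the [B]-inner product, applied to [z] and [B z]. *)
Lemma psd_dot_sqr_le n (B : 'M[R]_n) z : B^T = B -> psd B ->
  dot (B *m z) (B *m z) <= opnorm B * dot z (B *m z).
Proof.
move=> BT Bpsd; set w := B *m z.
have := psd_cauchy_schwarz z w BT Bpsd.
have -> : dot z (B *m w) = dot w w by rewrite -[in LHS]BT -dotMl.
have zBz0 : 0 <= dot z (B *m z) by have := Bpsd z; rewrite qformE.
have [w0|w0] := eqVneq (dot w w) 0; first by rewrite w0 mulr_ge0 // opnorm_ge0.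
have w_gt0 : 0 < dot w w by rewrite lt_def w0 dot_ge0.
move=> cs; have : dot w w ^+ 2 <= dot z (B *m z) * (opnorm B * dot w w).
  by apply: le_trans cs _; apply: ler_wpM2l => //; exact: dot_mulmx_le_opnorm.
by rewrite expr2 mulrA ler_pM2r // mulrC.
Qed.

End OperatorNorm.

Section OrthonormalColumns.
Variables (R : realType) (n k : nat) (Q : 'M[R]_(n, k)).
Hypothesis QtQ : Q^T *m Q = 1%:M.

Definition oproj (v : 'cV[R]_n) := Q *m (Q^T *m v).

Lemma orthoK (c : 'cV[R]_k) : Q^T *m (Q *m c) = c.
Proof. by rewrite mulmxA QtQ mul1mx. Qed.

Lemma dot_orthoQ (c : 'cV[R]_k) : dot (Q *m c) (Q *m c) = dot c c.
Proof. by rewrite dotMl orthoK. Qed.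

Lemma dot_oproj_perp (c : 'cV[R]_k) v : dot (Q *m c) (v - oproj v) = 0.
Proof. by rewrite dotMl mulmxBr orthoK subrr dot0r. Qed.

Lemma dot_oproj_split v :
  dot v v = dot (oproj v) (oproj v) + dot (v - oproj v) (v - oproj v).
Proof. by rewrite -dot_addr_orth ?dot_oproj_perp // addrC subrK. Qed.

Lemma dot_oproj_perp_le v : dot (v - oproj v) (v - oproj v) <= dot v v.
Proof. by rewrite [leRHS]dot_oproj_split lerDr dot_ge0. Qed.

Lemma dist_oproj_le v y : oproj y = y -> vnorm (v - oproj v) <= vnorm (v - y).
Proof.
move=> yQ; have -> : v - oproj v = (v - y) - oproj (v - y).
  by rewrite /oproj !mulmxBr -/(oproj y) yQ opprB addrA subrK.
by rewrite !vnormE ler_sqrt ?dot_ge0 // dot_oproj_perp_le.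
Qed.

Lemma oprojK_submx v : (v^T <= Q^T)%MS -> oproj v = v.
Proof.
case/submxP => D vD; have -> : v = Q *m D^T by rewrite -[LHS]trmxK vD trmx_mul trmxK.
by rewrite /oproj orthoK.
Qed.

Lemma trmx_mul_first_col (k0 : (0 < k)%N) (g : 'cV[R]_n) : g != 0 ->
  col (Ordinal k0) Q = (vnorm g)^-1 *: g -> Q^T *m g = vnorm g *: e1 k.
Proof.
move=> g0 Qg; have vg0 : vnorm g != 0 by rewrite vnorm_eq0.
have gE : g = vnorm g *: col (Ordinal k0) Q by rewrite Qg scalerA mulfV // scale1r.
rewrite [in LHS]gE colE -scalemxAr orthoK.
by apply/matrixP => i j; rewrite !mxE ord1 eqxx andbT.
Qed.

(* Take for [c] the vector [Q^T xo] (or [c0] if it vanishes) rescaled to norm [Delta]: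
   then [|Q c - xo|^2 = 2 Delta (Delta - mu)] with [mu = |Q^T xo|], while
   [eps^2 = Delta^2 - mu^2]. *)
Lemma exists_sphere_point_near (Delta : R) (xo : 'cV[R]_n) (c0 : 'cV[R]_k) :
  0 < Delta -> vnorm xo = Delta -> c0 != 0 ->
  let eps := vnorm (xo - oproj xo) in
  exists c : 'cV[R]_k, vnorm c = Delta /\
    vnorm (Q *m c - xo) ^+ 2 <= eps ^+ 2 * (1 + eps ^+ 2 / Delta ^+ 2).
Proof.
move=> D0 xoD c0_neq0 eps; have D_ge0 := ltW D0; set mu := vnorm (Q^T *m xo).
have [c [cD cxo]] : exists c : 'cV[R]_k, vnorm c = Delta /\ dot c (Q^T *m xo) = Delta * mu.
  have sphereZ v : v != 0 -> vnorm ((Delta / vnorm v) *: v) = Delta.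
    move=> v0; rewrite vnormZ ger0_norm ?divr_ge0 ?vnorm_ge0 //.
    by rewrite divfK // vnorm_eq0.
  have [u0|u0] := eqVneq (Q^T *m xo) 0.
    exists ((Delta / vnorm c0) *: c0); split; first exact: sphereZ.
    by rewrite /mu u0 dot0r vnorm0 mulr0.
  exists ((Delta / mu) *: (Q^T *m xo)); split; first exact: sphereZ.
  by rewrite dotZl -vnorm_sqr -/mu expr2 mulrA divfK // vnorm_eq0.
have eps2 : eps ^+ 2 = Delta ^+ 2 - mu ^+ 2.
  rewrite /eps /mu -xoD !vnorm_sqr [dot xo xo]dot_oproj_split /oproj dot_orthoQ.
  by rewrite [RHS]addrC addKr.
have mu0 : 0 <= mu := vnorm_ge0 _.
have muD : mu <= Delta.
  by rewrite -(ler_pXn2r (isT : (0 < 2)%N)) ?nnegrE // -subr_ge0 -eps2 sqr_ge0.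
exists c; split => //.
have -> : vnorm (Q *m c - xo) ^+ 2 = 2 * Delta * (Delta - mu).
  have cxo' : dot (Q *m c) xo = Delta * mu by rewrite dotMl cxo.
  rewrite vnorm_sqr dotBl !dotBr (dotC xo (Q *m c)) cxo' dot_orthoQ -!vnorm_sqr cD xoD.
  by ring.
rewrite eps2 -subr_ge0.
have -> : (Delta ^+ 2 - mu ^+ 2) * (1 + (Delta ^+ 2 - mu ^+ 2) / Delta ^+ 2)
          - 2 * Delta * (Delta - mu) = (Delta - mu) ^+ 2 * mu * (2 * Delta + mu) / Delta ^+ 2.
  by field; rewrite gt_eqF.
apply: divr_ge0; last exact: sqr_ge0.
by apply: mulr_ge0; [apply: mulr_ge0 => //; exact: sqr_ge0 | lra].
Qed.

(* The hypotheses say that [r = (I - Q Q^T) B (Q c - xo)]. *)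
Lemma galerkin_residual_le (B : 'M[R]_n) (xo r : 'cV[R]_n) (c : 'cV[R]_k) (a : R) :
  B^T = B -> psd B -> Q^T *m r = 0 -> r = B *m (Q *m c - xo) + a *: (Q *m c) ->
  dot r r <= opnorm B * dot (Q *m c - xo) (B *m (Q *m c - xo)).
Proof.
move=> BT Bpsd Qr0 rE; set z := B *m (Q *m c - xo).
have zE : z = r - a *: (Q *m c) by rewrite rE addrK.
have -> : r = z - oproj z.
  by rewrite /oproj zE !mulmxBr Qr0 -!scalemxAr orthoK mulmx0 sub0r opprK subrK.
by apply: le_trans (dot_oproj_perp_le z) _; exact: psd_dot_sqr_le.
Qed.

End OrthonormalColumns.

Lemma objective_shift (R : realType) n (A : 'M[R]_n) (lam : R) (g xo x : 'cV[R]_n) :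
  A^T = A -> (A + lam%:M) *m xo = - g ->
  2^-1 * dot x (A *m x) + dot x g =
  2^-1 * dot (x - xo) ((A + lam%:M) *m (x - xo)) - 2^-1 * lam * dot x x
  - 2^-1 * dot xo ((A + lam%:M) *m xo).
Proof.
move=> AT Hxo; have Axo : A *m xo = - g - lam *: xo.
  by rewrite -Hxo mulmxDl mul_scalar_mx addrK.
have sym : dot xo (A *m x) = dot x (A *m xo) by rewrite dotC dotMl AT.
rewrite Hxo mulmxBr Hxo mulmxDl mul_scalar_mx.
rewrite !(dotBl, dotDr, dotBr, dotZr, dotNr) sym Axo !(dotBr, dotNr, dotZr) (dotC xo x).
by field.
Qed.

Section GLTR.
Variables (R : realType) (n k : nat) (Q : 'M[R]_(n, k)) (A : 'M[R]_n).
Variables (g xo : 'cV[R]_n) (lam gamma : R).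
Hypotheses (QtQ : Q^T *m Q = 1%:M) (AT : A^T = A).
Hypotheses (Hxo : (A + lam%:M) *m xo = - g) (Qg : Q^T *m g = gamma *: e1 k).

Local Notation proj_obj c :=
  (2^-1 * qform (Q^T *m A *m Q) c + gamma * (c^T *m e1 k) 0 0).

Lemma projected_objE (c : 'cV[R]_k) :
  proj_obj c = 2^-1 * dot (Q *m c) (A *m (Q *m c)) + dot (Q *m c) g.
Proof. by rewrite qformE -!mulmxA -dotMl [dot (Q *m c) g]dotMl Qg dotZr. Qed.

Lemma gltr_energy_le (Delta : R) (h : 'cV[R]_k) :
  vnorm (Q *m h) = Delta ->
  (forall h' : 'cV[R]_k, vnorm h' <= Delta -> proj_obj h <= proj_obj h') ->
  forall c : 'cV[R]_k, vnorm c = Delta ->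
  dot (Q *m h - xo) ((A + lam%:M) *m (Q *m h - xo))
  <= dot (Q *m c - xo) ((A + lam%:M) *m (Q *m c - xo)).
Proof.
move=> hD hmin c cD; have cle : vnorm c <= Delta by rewrite cD.
have hh : dot (Q *m h) (Q *m h) = Delta ^+ 2 by rewrite -vnorm_sqr hD.
have cc : dot (Q *m c) (Q *m c) = Delta ^+ 2 by rewrite dot_orthoQ // -vnorm_sqr cD.
have := hmin c cle; rewrite !projected_objE !(objective_shift _ AT Hxo) hh cc.
by move=> ?; lra.
Qed.

Lemma gltr_residual_bound (Delta lamk : R) (h : 'cV[R]_k) :
  psd (A + lam%:M) -> Q^T *m g != 0 -> 0 < Delta ->
  vnorm xo = Delta -> vnorm (Q *m h) = Delta ->
  (forall h' : 'cV[R]_k, vnorm h' <= Delta -> proj_obj h <= proj_obj h') ->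
  (Q^T *m A *m Q + lamk%:M) *m h = - (gamma *: e1 k) ->
  let eps := vnorm (xo - oproj Q xo) in
  vnorm ((A + lamk%:M) *m (Q *m h) + g)
  <= opnorm (A + lam%:M) * Num.sqrt (1 + eps ^+ 2 / Delta ^+ 2) * eps.
Proof.
move=> Bpsd Qg0 D0 xoD hD hmin Hh; cbv zeta; set eps := vnorm (xo - oproj Q xo).
set B := A + lam%:M; set xk := Q *m h; set rk := _ + g.
have BT : B^T = B by rewrite /B linearD /= AT tr_scalar_mx.
have Qr0 : Q^T *m rk = 0.
  have QtAk : Q^T *m ((A + lamk%:M) *m xk) = (Q^T *m A *m Q + lamk%:M) *m h.
    by rewrite !mulmxA mulmxDr !mulmxDl mul_mx_scalar -scalemxAl QtQ scalemx1.
  by rewrite /rk mulmxDr QtAk Hh Qg addNr.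
have rkE : rk = B *m (xk - xo) + (lamk - lam) *: xk.
  rewrite /rk mulmxBr Hxo /B !mulmxDl !mul_scalar_mx opprK scalerBl.
  by apply/colP => i; rewrite !mxE; ring.
have [c [cD c_near]] := exists_sphere_point_near QtQ D0 xoD Qg0.
have S0 : 0 <= 1 + eps ^+ 2 / Delta ^+ 2 by rewrite addr_ge0 ?divr_ge0 ?sqr_ge0.
have B0 := opnorm_ge0 B.
rewrite -(ler_pXn2r (isT : (0 < 2)%N)) ?nnegrE ?vnorm_ge0 ?mulr_ge0 ?sqrtr_ge0 //.
rewrite vnorm_sqr !exprMn sqr_sqrtr //.
apply: le_trans (galerkin_residual_le QtQ BT Bpsd Qr0 rkE) _.
rewrite [opnorm B ^+ 2]expr2 -2!mulrA ler_wpM2l //.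
apply: le_trans (gltr_energy_le hD hmin cD) _.
apply: le_trans (dot_mulmx_le_opnorm _ _) _.
by rewrite ler_wpM2l // -vnorm_sqr mulrC.
Qed.

End GLTR.

Section KrylovSpace.
Variables (R : realType) (n : nat) (A : 'M[R]_n) (g : 'cV[R]_n).

Definition in_krylov j (v : 'cV[R]_n) :=
  exists cf : nat -> R, v = \sum_(i < j) cf i *: iter i (mulmx A) g.

Lemma in_krylov0 j : in_krylov j 0.
Proof. by exists (fun _ => 0); rewrite big1 // => i _; rewrite scale0r. Qed.

Lemma in_krylovD j u v : in_krylov j u -> in_krylov j v -> in_krylov j (u + v).
Proof.
case=> [cu ->] [cv ->]; exists (fun i => cu i + cv i); rewrite -big_split.
by apply: eq_bigr => i _; rewrite scalerDl.
Qed.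

Lemma in_krylovZ j a v : in_krylov j v -> in_krylov j (a *: v).
Proof.
case=> cf ->; exists (fun i => a * cf i); rewrite scaler_sumr.
by apply: eq_bigr => i _; rewrite scalerA.
Qed.

Lemma in_krylovB j u v : in_krylov j u -> in_krylov j v -> in_krylov j (u - v).
Proof. by move=> Ku Kv; rewrite -scaleN1r; apply: in_krylovD => //; apply: in_krylovZ. Qed.

Lemma in_krylov_mono j j' v : (j <= j')%N -> in_krylov j v -> in_krylov j' v.
Proof.
move=> le_jj' [cf ->]; exists (fun i => if (i < j)%N then cf i else 0).
rewrite (big_ord_widen _ (fun i => cf i *: iter i (mulmx A) g) le_jj') big_mkcond /=.
by apply: eq_bigr => i _; case: ifP => _; rewrite ?scale0r.
Qed.

Lemma in_krylovMA j v : in_krylov j v -> in_krylov j.+1 (A *m v).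
Proof.
case=> cf ->; exists (fun i => if i is i'.+1 then cf i' else 0).
rewrite big_ord_recl /= scale0r add0r mulmx_sumr.
by apply: eq_bigr => i _; rewrite -scalemxAr.
Qed.

Lemma in_krylov_g j : (0 < j)%N -> in_krylov j g.
Proof.
move=> j0; apply: (in_krylov_mono j0).
by exists (fun _ => 1); rewrite big_ord1 scale1r.
Qed.

Lemma in_krylov_submx j v : in_krylov j v -> (v^T <= (krylov j A g)^T)%MS.
Proof.
case=> cf ->; have -> : \sum_(i < j) cf i *: iter i (mulmx A) g
                      = krylov j A g *m \col_(i < j) cf i.
  by apply/colP => r; rewrite summxE mxE; apply: eq_bigr => i _; rewrite !mxE mulrC.
by rewrite trmx_mul submxMl.
Qed.

End KrylovSpace.

Section ChebyshevPair.
Variables (R : realType) (n : nat) (M : 'M[R]_n) (dl : R).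

(* On an eigenvector of [M] with eigenvalue [mu] the step matrix [[mu, mu^2 - dl^2], [1, mu]]
   has eigenvalues of modulus [dl]: the first component is [dl^j T_j(mu / dl) x], with [T_j]
   the Chebyshev polynomial. *)
Fixpoint cheb_pair (x : 'cV[R]_n) (j : nat) : 'cV[R]_n * 'cV[R]_n :=
  if j is j'.+1 then
    (M *m (cheb_pair x j').1 - (dl ^+ 2 *: (cheb_pair x j').2 - M *m (M *m (cheb_pair x j').2)),
     (cheb_pair x j').1 + M *m (cheb_pair x j').2)
  else (x, 0).

Hypothesis MT : M^T = M.

Lemma cheb_pair_energy x j :
  let t := (cheb_pair x j).1 in let u := (cheb_pair x j).2 in
  dot t t + (dl ^+ 2 * dot u u - dot (M *m u) (M *m u)) = dl ^+ (2 * j) * dot x x.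
Proof.
have dotMsym a b : dot (M *m a) b = dot a (M *m b) by rewrite dotMl MT.
elim: j => [|j IH] /=; first by rewrite mulmx0 dot0l mulr0 subrr addr0 expr0 mul1r.
move: IH; set t := (cheb_pair x j).1; set u := (cheb_pair x j).2 => IH.
rewrite mulnS exprD -mulrA -IH mulmxDr.
rewrite !(mulmxN, mulmxDr, scalemxAr, dotDl, dotDr, dotNl, dotNr, dotZl, dotZr) !dotMsym.
by ring.
Qed.

End ChebyshevPair.

Fixpoint cheb_scalar (R : realType) (s dl : R) (j : nat) : R * R :=
  if j is j'.+1 then
    (s * (cheb_scalar s dl j').1 - (dl ^+ 2 - s ^+ 2) * (cheb_scalar s dl j').2,
     (cheb_scalar s dl j').1 + s * (cheb_scalar s dl j').2)
  else (1, 0).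

(* At [s = sa^2 + sb^2 > dl = sb^2 - sa^2] the step matrix has the real eigenvalues
   [(sb +- sa)^2]. *)
Lemma cheb_scalar_closed (R : realType) (sa sb : R) j :
  let s := sa ^+ 2 + sb ^+ 2 in let dl := sb ^+ 2 - sa ^+ 2 in
  let p := (sb + sa) ^+ 2 in let q := (sb - sa) ^+ 2 in
  (cheb_scalar s dl j).1 = (p ^+ j + q ^+ j) / 2
  /\ (cheb_scalar s dl j).2 * (p - q) = p ^+ j - q ^+ j.
Proof.
move=> s dl p q; elim: j => [|j [IH1 IH2]] /=.
  by split; [rewrite !expr0; field | rewrite mul0r !expr0 subrr].
split.
  have -> : (dl ^+ 2 - s ^+ 2) * (cheb_scalar s dl j).2
            = - (sa * sb) * ((cheb_scalar s dl j).2 * (p - q)) by rewrite /dl /s /p /q; ring.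
  by rewrite IH1 IH2 (exprS p) (exprS q) /s /p /q; field.
by rewrite mulrDl -(mulrA s) IH2 IH1 (exprS p) (exprS q) /s /p /q; field.
Qed.

Lemma cheb_scalar_ratio (R : realType) (sa sb : R) j : 0 < sa -> sa <= sb ->
  let tau := (cheb_scalar (sa ^+ 2 + sb ^+ 2) (sb ^+ 2 - sa ^+ 2) j).1 in
  0 < tau /\ (sb ^+ 2 - sa ^+ 2) ^+ j / tau <= 2 * ((sb - sa) / (sb + sa)) ^+ j.
Proof.
move=> sa0 sab tau; have [tauE _] := cheb_scalar_closed sa sb j.
have sb0 : 0 < sb := lt_le_trans sa0 sab.
have pj0 : 0 < (sb + sa) ^+ j by rewrite exprn_gt0 // addr_gt0.
have pj_le : (sb + sa) ^+ j ^+ 2 / 2 <= tau.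
  by rewrite /tau tauE -exprM mulnC exprM ler_pM2r ?invr_gt0 // lerDl exprn_ge0 ?sqr_ge0.
have tau0 : 0 < tau by apply: lt_le_trans pj_le; rewrite divr_gt0 // exprn_gt0.
split => //; have dlE : sb ^+ 2 - sa ^+ 2 = (sb - sa) * (sb + sa) by ring.
have dl0 : 0 <= (sb - sa) ^+ j by rewrite exprn_ge0 // subr_ge0.
have ratioE : (sb - sa) ^+ j * (sb + sa) ^+ j / ((sb + sa) ^+ j ^+ 2 / 2)
               = 2 * ((sb - sa) / (sb + sa)) ^+ j.
  by rewrite expr_div_n; field; rewrite gt_eqF.
rewrite -ratioE dlE exprMn; apply: ler_wpM2l; first by apply: mulr_ge0 => //; exact: ltW.
by rewrite lef_pV2 ?posrE ?divr_gt0 ?exprn_gt0 ?addr_gt0.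
Qed.

Section ChebyshevKrylov.
Variables (R : realType) (n : nat) (A : 'M[R]_n) (g xo : 'cV[R]_n).
Variables (M : 'M[R]_n) (s dl : R).
Hypothesis M_krylov : forall j v, in_krylov A g j v -> in_krylov A g j.+1 (M *m v).
Hypothesis Mxo : M *m xo = s *: xo + 2 *: g.

Definition krylov_equiv j (sigma : R) (v : 'cV[R]_n) := in_krylov A g j (sigma *: xo - v).

Lemma krylov_equivD j s1 s2 v1 v2 : krylov_equiv j s1 v1 -> krylov_equiv j s2 v2 ->
  krylov_equiv j (s1 + s2) (v1 + v2).
Proof.
move=> K1 K2; rewrite /krylov_equiv scalerDl opprD addrACA; exact: in_krylovD.
Qed.

Lemma krylov_equivZ j a sigma v : krylov_equiv j sigma v ->
  krylov_equiv j (a * sigma) (a *: v).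
Proof. by move=> K; rewrite /krylov_equiv -scalerA -scalerBr; exact: in_krylovZ. Qed.

Lemma krylov_equivB j s1 s2 v1 v2 : krylov_equiv j s1 v1 -> krylov_equiv j s2 v2 ->
  krylov_equiv j (s1 - s2) (v1 - v2).
Proof.
move=> K1 K2; rewrite -mulN1r -scaleN1r; apply: krylov_equivD => //.
exact: krylov_equivZ.
Qed.

Lemma krylov_equiv_mono j j' sigma v : (j <= j')%N ->
  krylov_equiv j sigma v -> krylov_equiv j' sigma v.
Proof. exact: in_krylov_mono. Qed.

(* [M xo - s xo = 2 g] lies in the first Krylov space. *)
Lemma krylov_equivM j sigma v : krylov_equiv j sigma v ->
  krylov_equiv j.+1 (s * sigma) (M *m v).
Proof.
move=> K; rewrite /krylov_equiv.
have -> : (s * sigma) *: xo - M *m v = M *m (sigma *: xo - v) - (2 * sigma) *: g.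
  rewrite mulmxBr -scalemxAr Mxo.
  by apply/colP => i; rewrite !mxE; ring.
by apply: in_krylovB; [exact: M_krylov | apply: in_krylovZ; exact: in_krylov_g].
Qed.

Lemma cheb_pair_krylov_equiv j :
  krylov_equiv j (cheb_scalar s dl j).1 (cheb_pair M dl xo j).1
  /\ krylov_equiv j.-1 (cheb_scalar s dl j).2 (cheb_pair M dl xo j).2.
Proof.
elim: j => [|j [Kt Ku]] /=.
  by rewrite /krylov_equiv scale1r scale0r !subrr; split; exact: in_krylov0.
set tau := (cheb_scalar s dl j).1; set om := (cheb_scalar s dl j).2.
set t := (cheb_pair M dl xo j).1; set u := (cheb_pair M dl xo j).2.
have KMu : krylov_equiv j (s * om) (M *m u).
  case: j => [|j] in tau om t u Kt Ku *; last exact: krylov_equivM Ku.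
  by rewrite /krylov_equiv /u /om /= mulr0 mulmx0 scale0r subr0; exact: in_krylov0.
split.
  have -> : s * tau - (dl ^+ 2 - s ^+ 2) * om = s * tau - (dl ^+ 2 * om - s * (s * om)).
    by ring.
  apply: krylov_equivB; first exact: krylov_equivM.
  apply: krylov_equivB; last exact: krylov_equivM.
  by apply: krylov_equivZ; apply: krylov_equiv_mono Ku; exact: leq_trans (leq_pred j) _.
exact: krylov_equivD.
Qed.

Hypotheses (MT : M^T = M) (Mbound : forall x, dot (M *m x) (M *m x) <= dl ^+ 2 * dot x x).

Lemma cheb_krylov_approx k : 0 <= dl -> 0 < (cheb_scalar s dl k).1 ->
  exists2 y, in_krylov A g k y & vnorm (xo - y) <= vnorm xo * (dl ^+ k / (cheb_scalar s dl k).1).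
Proof.
move=> dl0; set tau := (cheb_scalar s dl k).1 => tau0.
have [Kt _] := cheb_pair_krylov_equiv k.
have := cheb_pair_energy dl MT xo k; move: Kt.
set t := (cheb_pair M dl xo k).1; set u := (cheb_pair M dl xo k).2 => Kt energy.
have t_le : vnorm t <= dl ^+ k * vnorm xo.
  rewrite -(ler_pXn2r (isT : (0 < 2)%N)) ?nnegrE ?mulr_ge0 ?exprn_ge0 ?vnorm_ge0 //.
  rewrite exprMn -exprM (mulnC k) !vnorm_sqr -energy lerDl subr_ge0.
  exact: Mbound.
exists (tau^-1 *: (tau *: xo - t)); first exact: in_krylovZ.
have -> : xo - tau^-1 *: (tau *: xo - t) = tau^-1 *: t.
  by rewrite scalerBr scalerA mulVf ?gt_eqF // scale1r opprB addrC subrK.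
have tauV0 : 0 <= tau^-1 by rewrite invr_ge0 ltW.
rewrite vnormZ ger0_norm //.
have -> : vnorm xo * (dl ^+ k / tau) = tau^-1 * (dl ^+ k * vnorm xo) by ring.
exact: ler_wpM2l.
Qed.

End ChebyshevKrylov.

Section RealSymmetricSpectrum.
Variable R : realType.
Local Notation C := R[i].
Local Notation toC := (real_complex R).

Definition cnorm2 n (z : 'cV[C]_n) : C := (map_mx Num.conj z^T *m z) 0 0.

Lemma cnorm2E n (z : 'cV[C]_n) : cnorm2 z = \sum_i `|z i 0| ^+ 2.
Proof. by rewrite /cnorm2 mxE; apply: eq_bigr => i _; rewrite !mxE sqr_normc mulrC. Qed.

Lemma sqr_norm_toC (r : R) : `|toC r| ^+ 2 = toC (r ^+ 2).
Proof. by rewrite sqr_normc /= oppr0 rmorphXn expr2. Qed.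

Lemma cnorm2_real n (x : 'cV[R]_n) : cnorm2 (map_mx toC x) = toC (dot x x).
Proof.
rewrite cnorm2E dotE rmorph_sum; apply: eq_bigr => i _.
by rewrite mxE sqr_norm_toC expr2.
Qed.

Lemma cnorm2_unitary n (P : 'M[C]_n) (z : 'cV[C]_n) :
  map_mx Num.conj P^T *m P = 1%:M -> cnorm2 (P *m z) = cnorm2 z.
Proof. by move=> PtP; rewrite /cnorm2 trmx_mul map_mxM -mulmxA (mulmxA _ P) PtP mul1mx. Qed.

Variables (n : nat) (A : 'M[R]_n).
Hypothesis AT : A^T = A.
Local Notation P := (spectralmx (map_mx toC A)).
Local Notation d := (spectral_diag (map_mx toC A)).

Lemma real_sym_hermsym : map_mx toC A \is hermsymmx.
Proof.
rewrite is_hermitianmxE expr0 scale1r; apply/eqP/matrixP => i j.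
by rewrite !mxE -[in RHS]AT mxE; apply/eqP; rewrite eq_complex /= oppr0 !eqxx.
Qed.

Lemma real_sym_spectral : map_mx toC A = invmx P *m diag_mx d *m P.
Proof. exact/orthomx_spectralP/hermitian_normalmx/real_sym_hermsym. Qed.

Lemma spectral_diag_eigenvalue j : exists2 r, d 0 j = toC r & eigenvalue A r.
Proof.
have /complex_realP [r dr] : d 0 j \is Num.real.
  exact/mxOverP/hermitian_spectral_diag_real/real_sym_hermsym.
exists r => //; rewrite -(eigenvalue_map toC).
set Ac := (X in eigenvalue X _); set z := (X in eigenvalue _ X).
have -> : Ac = map_mx toC A by [].
have -> : z = d 0 j by rewrite dr.
have Pu : P \in unitmx := spectral_unit _.
apply/eigenvalueP; exists (row j P).
  rewrite -row_mul [X in P *m X]real_sym_spectral !mulmxA mulmxV // mul1mx mul_diag_mx.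
  by apply/rowP => i; rewrite !mxE.
apply/negP => /eqP /(congr1 (mulmx^~ (invmx P))).
rewrite rowE -mulmxA mulmxV // mulmx1 mul0mx => /matrixP/(_ 0 j).
by rewrite !mxE !eqxx /= => /eqP; rewrite oner_eq0.
Qed.

(* In the eigenbasis of [A], [(lo + hi) I - 2 A] is diagonal with entries in
   [[lo - hi, hi - lo]]. *)
Lemma sym_shift_bound (lo hi : R) : (forall a, eigenvalue A a -> lo <= a <= hi) ->
  forall x : 'cV[R]_n, dot (((lo + hi)%:M - 2 *: A) *m x) (((lo + hi)%:M - 2 *: A) *m x)
                       <= (hi - lo) ^+ 2 * dot x x.
Proof.
move=> spec x; set c := lo + hi.
have Pu : P \in unitmx := spectral_unit _.
have iP : invmx P = map_mx Num.conj P^T by apply/invmx_unitary/spectral_unitarymx.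
have PtP : map_mx Num.conj P^T *m P = 1%:M by rewrite -iP mulVmx.
set m := \row_j (toC c - 2 * d 0 j).
have Mdiag : map_mx toC (c%:M - 2 *: A) = map_mx Num.conj P^T *m diag_mx m *m P.
  have -> : diag_mx m = (toC c)%:M - 2 *: diag_mx d.
    apply/matrixP => i j; rewrite !mxE; case: (i == j); rewrite ?mulr1n ?mulr0n //.
    by rewrite mulr0 subr0.
  rewrite mulmxBr mulmxBl mul_mx_scalar -scalemxAl PtP -scalemxAr -scalemxAl -iP.
  rewrite -real_sym_spectral map_mxB map_scalar_mx scalemx1; congr (_ - _).
  apply/matrixP => i j; rewrite !mxE.
  by change (toC (2 * A i j) = 2 * toC (A i j)); rewrite rmorphM rmorph_nat.
set y := P *m map_mx toC x.
have Mx : cnorm2 (map_mx toC ((c%:M - 2 *: A) *m x)) = cnorm2 (diag_mx m *m y).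
  rewrite map_mxM Mdiag -!mulmxA cnorm2_unitary // trmxCK.
  exact/unitarymxP/spectral_unitarymx.
have xy : cnorm2 y = toC (dot x x) by rewrite cnorm2_unitary // cnorm2_real.
have toCM (a b : R) : toC (a * b) = toC a * toC b by exact: rmorphM.
rewrite -lecR -cnorm2_real Mx toCM -xy !cnorm2E mulr_sumr; apply: ler_sum => i _.
rewrite mul_diag_mx mxE normrM exprMn; apply: ler_wpM2r; first exact: exprn_ge0.
have [r dr /spec /andP[lo_r r_hi]] := spectral_diag_eigenvalue i.
have toCB (a b : R) : toC (a - b) = toC a - toC b by exact: rmorphB.
have toC2 : toC 2 = 2 by exact: rmorph_nat.
rewrite mxE dr -toC2 -toCM -toCB sqr_norm_toC lecR /c.
nra.
Qed.

End RealSymmetricSpectrum.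

Lemma krylov_approx_kappa (R : realType) n (A : 'M[R]_n) (g xo : 'cV[R]_n) (lo hi lam : R) k :
  A^T = A -> (forall a, eigenvalue A a -> lo <= a <= hi) -> lo <= hi ->
  0 < lo + lam -> (A + lam%:M) *m xo = - g ->
  let kappa := (hi + lam) / (lo + lam) in
  exists2 y, in_krylov A g k y &
    vnorm (xo - y) <= 2 * vnorm xo * ((Num.sqrt kappa - 1) / (Num.sqrt kappa + 1)) ^+ k.
Proof.
move=> AT spec lohi lam0 Hxo kappa.
set sa := Num.sqrt (lo + lam); set sb := Num.sqrt (hi + lam).
have hi0 : 0 <= hi + lam by lra.
have saE : lo + lam = sa ^+ 2 by rewrite sqr_sqrtr // ltW.
have sbE : hi + lam = sb ^+ 2 by rewrite sqr_sqrtr.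
have sa0 : 0 < sa by rewrite sqrtr_gt0.
have sab : sa <= sb by rewrite ler_sqrt // lerD2r.
have sb0 : 0 < sb := lt_le_trans sa0 sab.
set M := (lo + hi)%:M - 2 *: A.
have MK j v : in_krylov A g j v -> in_krylov A g j.+1 (M *m v).
  move=> Kv; rewrite /M mulmxBl mul_scalar_mx -scalemxAl.
  apply: in_krylovB; first by apply: in_krylovZ; apply: in_krylov_mono Kv.
  by apply: in_krylovZ; apply: in_krylovMA.
have Mxo : M *m xo = (sa ^+ 2 + sb ^+ 2) *: xo + 2 *: g.
  have Axo : A *m xo = - g - lam *: xo by rewrite -Hxo mulmxDl mul_scalar_mx addrK.
  rewrite /M mulmxBl mul_scalar_mx -scalemxAl Axo -saE -sbE.
  by apply/colP => i; rewrite !mxE; ring.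
have MT : M^T = M by rewrite /M linearB /= linearZ /= tr_scalar_mx AT.
have dlE : sb ^+ 2 - sa ^+ 2 = hi - lo by rewrite -saE -sbE; ring.
have Mbound x : dot (M *m x) (M *m x) <= (sb ^+ 2 - sa ^+ 2) ^+ 2 * dot x x.
  by rewrite dlE; exact: sym_shift_bound.
have [tau0 ratio] := cheb_scalar_ratio k sa0 sab.
have dl0 : 0 <= sb ^+ 2 - sa ^+ 2 by rewrite dlE subr_ge0.
have [y Ky y_near] := cheb_krylov_approx MK Mxo MT Mbound dl0 tau0.
exists y => //; apply: le_trans y_near _.
have kappaE : Num.sqrt kappa = sb / sa.
  by rewrite /kappa saE sbE -expr_div_n sqrtr_sqr ger0_norm // divr_ge0 // ltW.
have -> : (Num.sqrt kappa - 1) / (Num.sqrt kappa + 1) = (sb - sa) / (sb + sa).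
  by rewrite kappaE; field; rewrite !gt_eqF // ?addr_gt0.
have -> : 2 * vnorm xo * ((sb - sa) / (sb + sa)) ^+ k
          = vnorm xo * (2 * ((sb - sa) / (sb + sa)) ^+ k) by ring.
by apply: ler_wpM2l; [exact: vnorm_ge0 | exact: ratio].
Qed.

Lemma sqrt_relative_bound_le (R : realType) (a Delta eps rho : R) :
  0 <= a -> 0 < Delta -> eps <= 2 * Delta * rho ->
  a * Num.sqrt (1 + eps ^+ 2 / Delta ^+ 2) * eps
  <= 2 * a * Num.sqrt (Delta ^+ 2 + eps ^+ 2) * rho.
Proof.
move=> a0 D0 eps_le.
have -> : Num.sqrt (Delta ^+ 2 + eps ^+ 2) = Delta * Num.sqrt (1 + eps ^+ 2 / Delta ^+ 2).
  have -> : Delta ^+ 2 + eps ^+ 2 = Delta ^+ 2 * (1 + eps ^+ 2 / Delta ^+ 2).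
    by field; rewrite gt_eqF.
  by rewrite sqrtrM ?sqr_ge0 // sqrtr_sqr ger0_norm // ltW.
have -> : 2 * a * (Delta * Num.sqrt (1 + eps ^+ 2 / Delta ^+ 2)) * rho
          = a * Num.sqrt (1 + eps ^+ 2 / Delta ^+ 2) * (2 * Delta * rho) by ring.
by apply: ler_wpM2l => //; rewrite mulr_ge0 ?sqrtr_ge0.
Qed.

Theorem theorem3p5 (R : realType) (n : nat) (A : 'M[R]_n) (g : 'cV[R]_n)
  (Delta : R) (alpha1 alphan : R)
  (xopt : 'cV[R]_n) (lamopt : R)
  (k : nat) (Q : 'M[R]_(n, k)) (T : 'M[R]_k) (h : 'cV[R]_k) (lamk : R) :
  (* A symmetric with largest / smallest eigenvalues alpha1 / alphan *)
  A^T = A ->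
  eigenvalue A alpha1 -> eigenvalue A alphan ->
  (forall a, eigenvalue A a -> alphan <= a <= alpha1) ->
  g != 0 -> 0 < Delta ->
  (* x_opt is a global minimizer of the TRS with multiplier lamopt *)
  vnorm xopt <= Delta ->
  (forall x, vnorm x <= Delta -> trs_obj A g xopt <= trs_obj A g x) ->
  0 <= lamopt ->
  (A + lamopt%:M) *m xopt = - g ->
  lamopt * (Delta - vnorm xopt) = 0 ->
  psd (A + lamopt%:M) ->
  (* easy case *)
  - alphan < lamopt ->
  (* Lanczos basis Q_k: orthonormal columns spanning K_k(A,g), q_1 = g/||g||,
     T_k = Q_k^T A Q_k; 1 <= k <= k_max *)
  (0 < k)%N ->
  Q^T *m Q = 1%:M ->
  (Q^T == (krylov k A g)^T)%MS ->
  (forall j : 'I_k, (j : nat) = 0%N -> col j Q = (vnorm g)^-1 *: g) ->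
  T = Q^T *m A *m Q ->
  (* GLTR iterate: h_k solves the projected TRS with multiplier lamk *)
  vnorm h <= Delta ->
  (forall h' : 'cV[R]_k, vnorm h' <= Delta ->
     2^-1 * qform T h + vnorm g * (h^T *m e1 k) 0 0
     <= 2^-1 * qform T h' + vnorm g * (h'^T *m e1 k) 0 0) ->
  0 <= lamk ->
  (T + lamk%:M) *m h = - (vnorm g *: e1 k) ->
  lamk * (Delta - vnorm h) = 0 ->
  psd (T + lamk%:M) ->
  (* both on the boundary *)
  vnorm xopt = Delta -> vnorm (Q *m h) = Delta ->
  let xk := Q *m h in
  let rk := (A + lamk%:M) *m xk + g in
  let Aopt := A + lamopt%:M in
  let kappa := (alpha1 + lamopt) / (alphan + lamopt) in
  let epsk := vnorm ((1%:M - Q *m Q^T) *m xopt) in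
  vnorm rk <= opnorm Aopt * Num.sqrt (1 + epsk ^+ 2 / Delta ^+ 2) * epsk
  /\ opnorm Aopt * Num.sqrt (1 + epsk ^+ 2 / Delta ^+ 2) * epsk
     <= 2 * opnorm Aopt * Num.sqrt (Delta ^+ 2 + epsk ^+ 2)
        * ((Num.sqrt kappa - 1) / (Num.sqrt kappa + 1)) ^+ k.
Proof.
move=> AT eig1 _ spec g0 D0 _ _ _ Hxo _ Bpsd easy k0 QtQ QK Qcol -> _ hmin _ Hh _ _ xoD xkD.
move=> xk rk Aopt kappa epsk.
have Qg := trmx_mul_first_col QtQ g0 (Qcol (Ordinal k0) erefl).
have oproj_krylov v : in_krylov A g k v -> oproj Q v = v.
  move=> Kv; apply: (oprojK_submx QtQ); case/andP: QK => _ KQ.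
  exact: submx_trans (in_krylov_submx Kv) KQ.
have Qg0 : Q^T *m g != 0.
  apply: contra_neq g0 => Qg0.
  by rewrite -(oproj_krylov g (in_krylov_g A g k0)) /oproj Qg0 mulmx0.
have -> : epsk = vnorm (xopt - oproj Q xopt) by rewrite /epsk mulmxBl mul1mx -mulmxA.
split; first exact: (gltr_residual_bound QtQ AT Hxo Qg Bpsd Qg0 D0 xoD xkD hmin Hh).
have lohi : alphan <= alpha1 by case/andP: (spec _ eig1).
have lam0 : 0 < alphan + lamopt by lra.
have [y Ky y_near] := krylov_approx_kappa k AT spec lohi lam0 Hxo.
apply: sqrt_relative_bound_le; [exact: opnorm_ge0 | exact: D0 |].
by rewrite -xoD; apply: le_trans y_near; exact: dist_oproj_le (oproj_krylov y Ky).
Qed.
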